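(* Let $k<\omega$ and let $\chi$ be an infinite cardinal with $\chi^{\aleph_0}=\chi$. For $\ell\le k$ let $S_\ell=\beth_\ell(\chi)$ (as a set of ordinals), and let $\Lambda=\prod_{\ell\le k}{}^\omega(S_\ell)$. Then there is a family $\langle\alpha_{\bar\eta,m,n}:\bar\eta\in\Lambda,\ m\le k,\ n<\omega\rangle$ of ordinals $\alpha_{\bar\eta,m,n}<\chi$ such that for every function $h:\Lambda_{\le k}\to\chi$ and every sequence $\langle\gamma_\ell:\ell\le k\rangle$ with $\gamma_\ell<\beth_\ell(\chi)$, there is $\bar\eta\in\Lambda$ with $\eta_\ell(0)=\gamma_\ell$ for all $\ell\le k$ and $h(\bar\eta\upharpoonleft\langle m,n\rangle)=\alpha_{\bar\eta,m,n}$ for all $m\le k$ and $n<\omega$.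
   Context: $\beth_0(\chi)=\chi$, $\beth_{\ell+1}(\chi)=2^{\beth_\ell(\chi)}$. For a set $X$, ${}^\omega X$ is the set of functions $\omega\to X$; $\Lambda$ consists of sequences $\bar\eta=\langle\eta_0,\dots,\eta_k\rangle$ with $\eta_\ell\in{}^\omega(S_\ell)$. For $\bar\eta\in\Lambda$, $m\le k$, $n<\omega$, $\bar\eta\upharpoonleft\langle m,n\rangle$ is the sequence obtained from $\bar\eta$ by replacing $\eta_m$ with its restriction $\eta_m\restriction n$ (a finite sequence). $\Lambda_m=\{\bar\eta\upharpoonleft\langle m,n\rangle:\bar\eta\in\Lambda,n<\omega\}$ and $\Lambda_{\le k}=\bigcup_{m\le k}\Lambda_m$. *)

From mathcomp Require Import all_boot.
Set Implicit Arguments. Unset Strict Implicit. Unset Printing Implicit Defensive.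

(* Cardinals are represented by types (up to bijection).
   beth l X : beth_0(X) = X, beth_{l+1}(X) = power set of beth_l(X). *)
Fixpoint beth (X : Type) (l : nat) : Type :=
  match l with
  | 0 => X
  | l'.+1 => beth X l' -> Prop
  end.

Definition Lam (X : Type) (k : nat) : Type :=
  forall l : 'I_k.+1, nat -> beth X l.

(* Lambda_{<= k}: an element of Lambda_m is a sequence whose m-th entry is a
   finite sequence (eta_m restricted to n, a list of length n) and whose other
   entries l <> m are omega-sequences. *)
Definition LamLe (X : Type) (k : nat) : Type :=
  { m : 'I_k.+1 & (seq (beth X m) * (forall l : 'I_k.+1, l != m -> nat -> beth X l))%type }.

Definition restr (X : Type) (k : nat) (eta : Lam X k) (m : 'I_k.+1) (n : nat)
  : LamLe X k :=
  existT _ m (mkseq (eta m) n, fun l (_ : l != m) => eta l).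

Definition infinite_type (X : Type) : Prop :=
  exists f : nat -> X, injective f.

Definition omega_power_eq (X : Type) : Prop :=
  exists f : (nat -> X) -> X, bijective f.

From mathcomp Require Import all_boot.
From Stdlib Require Import ClassicalEpsilon IndefiniteDescription.
From Stdlib Require Import FunctionalExtensionality PropExtensionality.

Set Implicit Arguments.
Unset Strict Implicit.
Unset Printing Implicit Defensive.

(* Since |X|^aleph_0 = |X|, each beth_i(X) absorbs countable products, so
   X x prod_{l <= i} beth_l(X)^omega injects into beth_i(X), say by [key].
   A function G of eta depending only on the coordinates below m = i+1 is
   then coded by the set { key nu (G nu) } in beth_m(X) and recovered by
   choice; for m = 0, G is constant.  With alpha eta m n the decoding of
   eta_m(n+1) at eta, the sequence eta is built from eta_k down to eta_0:
   eta_m(0) = gamma_m and eta_m(n+1) codes h at eta |` <m, n>, viewed as a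
   function of the coordinates below m, which are still free. *)

Section Pack.

Variables (B : Type) (enc : option nat * B -> B).
Hypothesis encI : injective enc.

Definition pack (p : B * (nat -> B -> Prop)) : B -> Prop :=
  fun t => t = enc (None, p.1) \/ exists n u, t = enc (Some n, u) /\ p.2 n u.

Lemma pack_None p b : pack p (enc (None, b)) <-> b = p.1.
Proof.
split=> [[/encI [] // | [n [u [/encI //]]]] | ->]; by left.
Qed.

Lemma pack_Some p n u : pack p (enc (Some n, u)) <-> p.2 n u.
Proof.
split=> [[/encI // | [n' [u' [/encI [-> ->] //]]]] | Hu]; by right; exists n, u.
Qed.

Lemma pack_inj : injective pack.
Proof.
move=> [b S] [b' S'] E.
have bb' : b = b' by apply/(pack_None (b', S')); rewrite -E; apply/pack_None.
subst b'; congr (_, _); apply: functional_extensionality => n.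
apply: functional_extensionality => u; apply: propositional_extensionality.
by move: (pack_Some (b, S) n u) (pack_Some (b, S') n u); rewrite E /= => <- <-.
Qed.

Definition pow_enc (b0 : B) (p : option nat * (B -> Prop)) : B -> Prop :=
  pack (enc (p.1, b0), fun _ => p.2).

Lemma pow_enc_inj b0 : injective (pow_enc b0).
Proof.
by move=> [o P] [o' P'] /pack_inj [/encI [->] /(congr1 (fun F => F 0)) /= ->].
Qed.

End Pack.

Lemma prefix_choice (B : Type) (b0 : B) (P : seq B -> B -> Prop) :
  (forall s, exists b, P s b) ->
  exists c : nat -> B, c 0 = b0 /\ forall n, P (mkseq c n) (c n.+1).
Proof.
move=> /functional_choice [next nextP].
pose fix pre n :=
  if n is n'.+1 then rcons (pre n') (if n' is n''.+1 then next (pre n'') else b0)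
  else [::].
pose c n := if n is n'.+1 then next (pre n') else b0.
have preE n : mkseq c n = pre n by elim: n => // n IH; rewrite mkseqS IH.
by exists c; split=> // n; rewrite preE.
Qed.

Section Decoding.

Variables (A X B : Type) (x0 : X) (R : A -> A -> Prop) (key : A -> X -> B).
Hypothesis keyI : forall a a' x x', key a x = key a' x' -> x = x' /\ R a a'.

Definition code (G : A -> X) : B -> Prop := fun b => exists a, b = key a (G a).

Definition decode (c : B -> Prop) (a : A) : X :=
  epsilon (inhabits x0) (fun x => c (key a x)).

Lemma decode_code (G : A -> X) :
  (forall a a', R a a' -> G a = G a') -> forall a, decode (code G) a = G a.
Proof.
move=> GR a; rewrite /decode.
have [a' /keyI [-> Raa']] : code G (key a (epsilon (inhabits x0) (fun x => code G (key a x)))).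
  by apply: (epsilon_spec _ (fun x => code G (key a x))); exists (G a), a.
by rewrite (GR _ _ Raa').
Qed.

End Decoding.

Section Agreement.

Variables (X : Type) (k : nat).

Definition agree_below (m : nat) (eta eta' : Lam X k) :=
  forall l : 'I_k.+1, l < m -> eta l = eta' l.

Definition agree_from (j : nat) (eta eta' : Lam X k) :=
  forall l : 'I_k.+1, j <= l -> eta l = eta' l.

Definition depends_below (m : nat) (G : Lam X k -> X) :=
  forall eta eta', agree_below m eta eta' -> G eta = G eta'.

End Agreement.

Section BethCoding.

Variables (X : Type) (f : nat -> X) (g : (nat -> X) -> X) (k : nat).
Hypotheses (fI : injective f) (gI : injective g).

Definition beth_point (i : nat) : beth X i :=
  match i return beth X i with 0 => f 0 | _.+1 => fun _ => False end.

Definition base_enc (p : option nat * X) : X :=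
  g (fun n => if n is 0 then p.2 else f (pickle p.1)).

Lemma base_enc_inj : injective base_enc.
Proof.
move=> [o x] [o' x'] /gI E.
move: (congr1 (fun F => F 1) E) (congr1 (fun F => F 0) E) => /= /fI.
by move=> /(pcan_inj pickleK) -> ->.
Qed.

Fixpoint beth_enc (i : nat) : option nat * beth X i -> beth X i :=
  match i return option nat * beth X i -> beth X i with
  | 0 => base_enc
  | i'.+1 => pow_enc (@beth_enc i') (beth_point i') end.
Arguments beth_enc : clear implicits.

Lemma beth_enc_inj i : injective (beth_enc i).
Proof. by elim: i => [|i IH]; [exact: base_enc_inj | exact: pow_enc_inj]. Qed.

Lemma column_exists i : exists col : Lam X k -> nat -> beth X i,
  forall eta eta', col eta = col eta' ->
    forall l : 'I_k.+1, val l = i -> eta l = eta' l.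
Proof.
case: (boolP (i < k.+1)) => [ik | ik].
  exists (fun eta => eta (Ordinal ik)) => eta eta' E l li.
  by have -> : l = Ordinal ik by apply: val_inj.
(* No coordinate has index i, so any selector works. *)
exists (fun _ _ => beth_point i) => eta eta' _ l li.
by move: ik; rewrite -li ltn_ord.
Qed.

Lemma key_exists i : exists key : Lam X k -> X -> beth X i,
  forall eta eta' x x', key eta x = key eta' x' -> x = x' /\ agree_below i.+1 eta eta'.
Proof.
elim: i => [|i [key keyI]].
  exists (fun (eta : Lam X k) x => g (fun n => if n is n'.+1 then eta ord0 n' else x)).
  move=> eta eta' x x' /gI E; split; first exact: (congr1 (fun F => F 0) E).
  move=> l; rewrite ltnS leqn0 => /eqP l0; have -> : l = ord0 by apply: val_inj.
  by apply: functional_extensionality => n; exact: (congr1 (fun F => F n.+1) E).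
have [col colI] := column_exists i.+1.
exists (fun eta x => pack (beth_enc i) (key eta x, col eta)).
move=> eta eta' x x' /(pack_inj (@beth_enc_inj i)) [/keyI [-> agr] /colI colE].
split=> // l; rewrite ltnS leq_eqVlt => /orP [/eqP | /agr //]; exact: colE.
Qed.

Lemma decoder_exists (m : nat) : exists dec : beth X m -> Lam X k -> X,
  forall G, depends_below m G -> exists c, forall eta, dec c eta = G eta.
Proof.
case: m => [|i].
  exists (fun c _ => c) => G GD; exists (G (fun l _ => beth_point l)) => eta.
  by apply: GD.
have [key keyI] := key_exists i.
exists (decode (f 0) key) => G GD; exists (code key G).
exact (decode_code (f 0) keyI GD).
Qed.

End BethCoding.

Section Construction.

Variables (X : Type) (k : nat) (dec : forall m : 'I_k.+1, beth X m -> Lam X k -> X).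
Arguments dec : clear implicits.
Hypothesis decP : forall (m : 'I_k.+1) G,
  depends_below m G -> exists c, forall eta, dec m c eta = G eta.
Variables (h : LamLe X k -> X) (gamma : forall l : 'I_k.+1, beth X l).

(* The equations for the coordinates m >= j must hold whatever the coordinates
   below j turn out to be, as those are chosen later. *)
Definition fits (j : nat) (eta : Lam X k) : Prop :=
  (forall l : 'I_k.+1, j <= l -> eta l 0 = gamma l) /\
  forall eta', agree_from j eta' eta ->
    forall (m : 'I_k.+1) n, j <= m -> h (restr eta' m n) = dec m (eta' m n.+1) eta'.

Lemma fits_top eta : fits k.+1 eta.
Proof. by split=> [l | eta' _ m n]; rewrite leqNgt ltn_ord. Qed.

Lemma fits_step (j : 'I_k.+1) eta : fits j.+1 eta -> exists eta', fits j eta'.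
Proof.
move=> [eta0 etah].
have lt_neq (l : 'I_k.+1) : j <= l -> j != l -> j < l.
  by move=> jl ne; rewrite ltn_neqAle jl andbT.
pose G (s : seq (beth X j)) (nu : Lam X k) :=
  h (existT _ j (s, fun l (_ : l != j) => if l < j then nu l else eta l)).
have GD s : depends_below j (G s).
  move=> nu nu' agr; congr (h (existT _ j (s, _))).
  apply: functional_extensionality_dep => l; apply: functional_extensionality => _.
  by case: ifP => // /agr ->.
have [c [c0 cS]] := prefix_choice (gamma j) (fun s => decP (GD s)).
exists (dfwith eta c); split=> [l jl | eta' agr m n jm].
  have [<- | ne] := eqVneq j l; first by rewrite dfwith_in.
  by rewrite dfwith_out // eta0 // lt_neq.
have agr_up : agree_from j.+1 eta' eta.
  move=> l jl; rewrite agr ?(ltnW jl) // dfwith_out //.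
  by apply: contraTneq jl => <-; rewrite ltnn.
have [mj | ne] := eqVneq m j; last by apply: etah => //; rewrite lt_neq // eq_sym.
have eta'j : eta' j = c by rewrite agr // dfwith_in.
rewrite mj eta'j cS /G /restr eta'j; congr (h (existT _ j (_, _))).
apply: functional_extensionality_dep => l; apply: functional_extensionality => ne.
case: ifP => // /negbT; rewrite -leqNgt => lj.
by rewrite agr_up // lt_neq // eq_sym.
Qed.

Lemma fits_exists : exists eta, fits 0 eta.
Proof.
suff fits_from d j : j + d = k.+1 -> exists eta, fits j eta by exact: fits_from.
elim: d j => [|d IH] j jd.
  by rewrite addn0 in jd; subst j; exists (fun l _ => gamma l); exact: fits_top.
have jk : j < k.+1 by rewrite -jd -addSnnS leq_addr.
have [eta fits_eta] : exists eta, fits j.+1 eta by apply: IH; rewrite addSnnS.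
exact: (@fits_step (Ordinal jk) eta fits_eta).
Qed.

End Construction.

Theorem claim2p1 (k : nat) (X : Type)
  (Xinf : infinite_type X) (Xom : omega_power_eq X) :
  exists alpha : Lam X k -> 'I_k.+1 -> nat -> X,
    forall (h : LamLe X k -> X) (gamma : forall l : 'I_k.+1, beth X l),
      exists eta : Lam X k,
        (forall l : 'I_k.+1, eta l 0 = gamma l) /\
        (forall (m : 'I_k.+1) (n : nat), h (restr eta m n) = alpha eta m n).
Proof.
have [f fI] := Xinf; have [g [g' gK _]] := Xom.
pose dec_spec (m : 'I_k.+1) :=
  constructive_indefinite_description _ (decoder_exists k fI (can_inj gK) m).
exists (fun eta m n => sval (dec_spec m) (eta m n.+1) eta) => h gamma.
have [eta [eta0 etah]] := fits_exists (fun m => svalP (dec_spec m)) h gamma.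
by exists eta; split=> [l | m n]; [exact: eta0 | exact: etah].
Qed.
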